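(* Let $f\in\mathcal N(J)^\perp$ and let $(f_n)$ be generated by the scheme (S) (no spectral-case assumption). Then $(f_n)$ is bounded by $\|f\|$ and admits a subsequence $(f_{n_k})$ converging weakly in $\mathcal H$ to some $g\in\mathcal H$.
   Context: Let $\mathcal H$ be a real Hilbert space and $J:\mathcal H\to\mathbb R\cup\{+\infty\}$ a proper, convex, lower semicontinuous, absolutely one-homogeneous functional ($J(\alpha u)=|\alpha|J(u)$). Let $\mathcal N(J)=\{u: J(u)=0\}$ be its null-space, and assume the Poincaré-type inequality: there is $C>0$ with $\|u\|\le C J(u)$ for all $u\in\mathcal N(J)^\perp$. $\partial J$ denotes the convex subdifferential. Gradient flow: for $g\in\mathcal H$, the gradient flow of $J$ with datum $g$ is the solution $u$ of $u'(t)=-p(t)$, $p(t)\in\partial J(u(t))$, $u(0)=g$, where $p(t)$ is the element of minimal norm in $\partial J(u(t))$. For $g\in\mathcal N(J)^\perp\setminus\{0\}$ the flow extinguishes at a finite time $T>0$. An extinction profile of $g$ is any element $p^*=\lim_{k\to\infty}\frac{1}{T-t_k}\int_{t_k}^T p(s)\,ds$ for some increasing sequence $t_k\to T$ along which the limit exists; it is known that such $p^*$ exists, $p^*\neq 0$ and $p^*\in\partial J(p^* )$. Scheme (S): given $f\in\mathcal N(J)^\perp$, set $f_0=f$ and for $n\ge0$ let $p_n^*$ be an extinction profile of $f_n$, $c_n=\langle f_n,p_n^*\rangle/\|p_n^*\|^2$, and $f_{n+1}=f_n-c_np_n^*$. (If some $f_n=0$, the scheme is stopped and we set $f_m=0$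 for $m\ge n$.) *)

From Stdlib Require Import Reals Lra.
Open Scope R_scope.

Record Hilbert : Type := {
  hcar :> Type;
  hzero : hcar;
  hadd : hcar -> hcar -> hcar;
  hopp : hcar -> hcar;
  hscal : R -> hcar -> hcar;
  hinner : hcar -> hcar -> R;
  hadd_assoc : forall x y z, hadd x (hadd y z) = hadd (hadd x y) z;
  hadd_comm : forall x y, hadd x y = hadd y x;
  hadd_0 : forall x, hadd x hzero = x;
  hadd_opp : forall x, hadd x (hopp x) = hzero;
  hscal_1 : forall x, hscal 1 x = x;
  hscal_assoc : forall a b x, hscal a (hscal b x) = hscal (a * b) x;
  hscal_distr_l : forall a x y, hscal a (hadd x y) = hadd (hscal a x) (hscal a y);
  hscal_distr_r : forall a b x, hscal (a + b) x = hadd (hscal a x) (hscal b x);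
  hinner_sym : forall x y, hinner x y = hinner y x;
  hinner_add_l : forall x y z, hinner (hadd x y) z = hinner x z + hinner y z;
  hinner_scal_l : forall a x y, hinner (hscal a x) y = a * hinner x y;
  hinner_pos : forall x, 0 <= hinner x x;
  hinner_def : forall x, hinner x x = 0 -> x = hzero;
  hcomplete : forall u : nat -> hcar,
    (forall eps, eps > 0 -> exists N, forall m n, (m >= N)%nat -> (n >= N)%nat ->
        sqrt (hinner (hadd (u m) (hopp (u n))) (hadd (u m) (hopp (u n)))) < eps) ->
    exists l, forall eps, eps > 0 -> exists N, forall n, (n >= N)%nat ->
        sqrt (hinner (hadd (u n) (hopp l)) (hadd (u n) (hopp l))) < eps
}.

Arguments hzero {h}.
Arguments hadd {h}.
Arguments hopp {h}.
Arguments hscal {h}.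
Arguments hinner {h}.

Definition hsub {H : Hilbert} (x y : H) : H := hadd x (hopp y).
Definition hnorm {H : Hilbert} (x : H) : R := sqrt (hinner x x).

Definition hconv {H : Hilbert} (u : nat -> H) (l : H) : Prop :=
  forall eps, eps > 0 -> exists N, forall n, (n >= N)%nat -> hnorm (hsub (u n) l) < eps.

Definition hweak_conv {H : Hilbert} (u : nat -> H) (l : H) : Prop :=
  forall v : H, Un_cv (fun n => hinner (u n) v) (hinner l v).

(* ---------- Functionals with values in R ∪ {+oo} (None = +oo) ---------- *)
Definition functional (H : Hilbert) := H -> option R.

Definition proper {H : Hilbert} (J : functional H) : Prop :=
  exists u, J u <> None.

Definition convex {H : Hilbert} (J : functional H) : Prop :=
  forall (u v : H) (a b l : R), J u = Some a -> J v = Some b -> 0 <= l <= 1 ->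
    exists c, J (hadd (hscal l u) (hscal (1 - l) v)) = Some c /\
              c <= l * a + (1 - l) * b.

Definition lsc {H : Hilbert} (J : functional H) : Prop :=
  forall (r : R) (u : nat -> H) (l : H),
    hconv u l ->
    (forall k, exists a, J (u k) = Some a /\ a <= r) ->
    exists a, J l = Some a /\ a <= r.

(* absolute one-homogeneity J(alpha u) = |alpha| J(u)  (alpha <> 0; the case
   alpha = 0 i.e. J(0)=0 follows from the other assumptions) *)
Definition abs_one_homogeneous {H : Hilbert} (J : functional H) : Prop :=
  forall (alpha : R) (u : H), alpha <> 0 ->
    J (hscal alpha u) = option_map (fun x => Rabs alpha * x) (J u).

Definition nullspace {H : Hilbert} (J : functional H) (u : H) : Prop :=
  J u = Some 0.

Definition in_null_perp {H : Hilbert} (J : functional H) (u : H) : Prop :=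
  forall w, nullspace J w -> hinner u w = 0.

Definition poincare {H : Hilbert} (J : functional H) : Prop :=
  exists C, C > 0 /\
    forall u a, in_null_perp J u -> J u = Some a -> hnorm u <= C * a.

Definition subdiff {H : Hilbert} (J : functional H) (u p : H) : Prop :=
  exists a, J u = Some a /\
    forall v b, J v = Some b -> a + hinner p (hsub v u) <= b.

Definition min_norm_subgrad {H : Hilbert} (J : functional H) (u p : H) : Prop :=
  subdiff J u p /\ forall q, subdiff J u q -> hnorm p <= hnorm q.

(* u : [0,oo) -> H (values at negative times irrelevant), u(0) = g,
   u continuous on [0,oo), and for every t > 0 the right derivative of u at t
   exists and equals -p(t), with p(t) the minimal-norm element of dJ(u(t))
   (Brezis' strong solution of u' = -dJ(u) with the "lazy" selection). *)
Definition gradient_flow {H : Hilbert} (J : functional H) (g : H)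
    (u p : R -> H) : Prop :=
  u 0 = g /\
  (forall t, 0 <= t -> forall eps, eps > 0 -> exists delta, delta > 0 /\
      forall s, 0 <= s -> Rabs (s - t) < delta -> hnorm (hsub (u s) (u t)) < eps) /\
  (forall t, t > 0 -> min_norm_subgrad J (u t) (p t)) /\
  (forall t, t > 0 -> forall eps, eps > 0 -> exists delta, delta > 0 /\
      forall h, 0 < h < delta ->
        hnorm (hadd (hscal (/ h) (hsub (u (t + h)) (u t))) (p t)) <= eps).

(* (weak / Pettis-Riemann) integral of an H-valued function over [a,b]:
   w = \int_a^b p(s) ds  iff  <w,v> = \int_a^b <p(s),v> ds for all v.
   For the gradient flow this coincides with the Bochner integral. *)
Definition is_integral {H : Hilbert} (p : R -> H) (a b : R) (w : H) : Prop :=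
  forall v : H, exists pr : Riemann_integrable (fun s => hinner (p s) v) a b,
    RiemannInt pr = hinner w v.

Definition extinction_time {H : Hilbert} (u : R -> H) (T : R) : Prop :=
  T > 0 /\ (forall t, T <= t -> u t = hzero) /\
  (forall t, 0 <= t < T -> u t <> hzero).

Definition extinction_profile {H : Hilbert} (J : functional H) (g pstar : H) : Prop :=
  exists (u p : R -> H) (T : R) (tk : nat -> R) (I : nat -> H),
    gradient_flow J g u p /\ extinction_time u T /\
    (forall k, 0 < tk k < T) /\
    (forall k, tk k < tk (S k)) /\
    Un_cv tk T /\
    (forall k, is_integral p (tk k) T (I k)) /\
    hconv (fun k => hscal (/ (T - tk k)) (I k)) pstar.

Definition scheme_S {H : Hilbert} (J : functional H) (f : H)
    (fs ps : nat -> H) : Prop :=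
  fs 0%nat = f /\
  (forall n, fs n = hzero -> fs (S n) = hzero) /\
  (forall n, fs n <> hzero ->
     extinction_profile J (fs n) (ps n) /\
     fs (S n) = hsub (fs n)
        (hscal (hinner (fs n) (ps n) / (hnorm (ps n) ^ 2)) (ps n))).

(* Boundedness is elementary and uses no property of J: one step of the
   scheme, f_n |-> f_n - (<f_n,p>/||p||^2) p, is the orthogonal projection of
   f_n onto the orthogonal complement of p, so it does not increase the norm.

   The second claim is the sequential weak compactness of bounded sets in a
   Hilbert space, proved here from completeness alone:
   - a diagonal argument (Bolzano-Weierstrass in R, countably many times)
     gives a subsequence x_k such that <x_k, v> converges for every v in the
     linear span V of the sequence;
   - the limit functional L is bounded and linear on V; a minimising sequence
     of the energy ||z||^2/2 - L z over V is Cauchy (parallelogram law) and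
     its limit g represents L on V (Riesz representation on a subspace);
   - for an arbitrary test vector u, the same representation applied to
     <u, .> yields a point p of the closure of V with <x_k, u> = <x_k, p> and
     <g, u> = <g, p>; approximating p by elements of V gives <x_k,u> -> <g,u>. *)

From Stdlib Require Import Reals Lra Lia ClassicalEpsilon Classical.
Open Scope R_scope.

Section InnerProduct.
Variable H : Hilbert.
Implicit Types x y z : H.

Lemma inner_zero_l y : hinner (@hzero H) y = 0.
Proof. pose proof (hinner_add_l H hzero hzero y) as E. rewrite hadd_0 in E. lra. Qed.

Lemma inner_opp_l x y : hinner (hopp x) y = - hinner x y.
Proof.
  pose proof (hinner_add_l H x (hopp x) y) as E.
  rewrite hadd_opp, inner_zero_l in E. lra.
Qed.

Lemma inner_sub_l x y z : hinner (hsub x y) z = hinner x z - hinner y z.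
Proof. unfold hsub. rewrite hinner_add_l, inner_opp_l. ring. Qed.

Lemma inner_zero_r y : hinner y (@hzero H) = 0.
Proof. rewrite hinner_sym. apply inner_zero_l. Qed.

Lemma inner_add_r x y z : hinner z (hadd x y) = hinner z x + hinner z y.
Proof. rewrite !(hinner_sym _ z). apply hinner_add_l. Qed.

Lemma inner_scal_r a x y : hinner y (hscal a x) = a * hinner y x.
Proof. rewrite !(hinner_sym _ y). apply hinner_scal_l. Qed.

Lemma inner_sub_r x y z : hinner z (hsub x y) = hinner z x - hinner z y.
Proof. rewrite !(hinner_sym _ z). apply inner_sub_l. Qed.

Lemma hnorm_sq x : hnorm x ^ 2 = hinner x x.
Proof. apply pow2_sqrt, hinner_pos. Qed.

Lemma hnorm_nonneg x : 0 <= hnorm x.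
Proof. apply sqrt_pos. Qed.

Lemma cauchy_schwarz_sq x y : hinner x y ^ 2 <= hinner x x * hinner y y.
Proof.
  destruct (Req_dec (hinner y y) 0) as [Hy0 | Hy0].
  { apply hinner_def in Hy0; subst y. rewrite !inner_zero_r. simpl. lra. }
  assert (Hy : 0 < hinner y y) by (pose proof (hinner_pos H y); lra).
  set (t := hinner x y / hinner y y).
  assert (Ht : t * hinner y y = hinner x y) by (unfold t; field; lra).
  (* expand 0 <= ||x - t y||^2 and multiply by ||y||^2 *)
  pose proof (hinner_pos H (hsub x (hscal t y))) as Hpos.
  rewrite inner_sub_l, !inner_sub_r, !hinner_scal_l, !inner_scal_r,
    (hinner_sym _ y x) in Hpos.
  assert (Hprod : 0 <= hinner y y * (hinner x x - t * hinner x y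
                    - (t * hinner x y - t * (t * hinner y y))))
    by (apply Rmult_le_pos; lra).
  replace (hinner y y * (hinner x x - t * hinner x y
                    - (t * hinner x y - t * (t * hinner y y))))
    with (hinner x x * hinner y y - 2 * (t * hinner y y) * hinner x y
          + (t * hinner y y) ^ 2) in Hprod by ring.
  rewrite Ht in Hprod. lra.
Qed.

Lemma cauchy_schwarz x y : Rabs (hinner x y) <= hnorm x * hnorm y.
Proof.
  unfold hnorm. rewrite <- sqrt_mult by apply hinner_pos.
  rewrite <- sqrt_Rsqr_abs. apply sqrt_le_1_alt. unfold Rsqr.
  pose proof (cauchy_schwarz_sq x y). lra.
Qed.

Lemma inner_bound x v B : hnorm x <= B -> Rabs (hinner x v) <= B * hnorm v.
Proof.
  intros Hx. eapply Rle_trans; [apply cauchy_schwarz|].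
  apply Rmult_le_compat_r; [apply hnorm_nonneg | exact Hx].
Qed.

End InnerProduct.

(* One step of scheme (S) is the orthogonal projection of x onto the
   orthogonal complement of p, so it does not increase the norm. *)
Lemma scheme_step_norm_le (H : Hilbert) (x p : H) :
  let x' := hsub x (hscal (hinner x p / (hnorm p ^ 2)) p) in
  hnorm x' <= hnorm x.
Proof.
  intros x'. apply sqrt_le_1_alt. unfold x'. rewrite hnorm_sq.
  set (c := hinner x p / hinner p p).
  rewrite inner_sub_l, !inner_sub_r, !hinner_scal_l, !inner_scal_r, (hinner_sym _ p x).
  destruct (Req_dec (hinner p p) 0) as [Hp0 | Hp0].
  { apply hinner_def in Hp0; subst p. rewrite !inner_zero_r. lra. }
  assert (Hp : 0 < hinner p p) by (pose proof (hinner_pos H p); lra).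
  assert (Hc : c * hinner p p = hinner x p) by (unfold c; field; lra).
  (* the new squared norm is ||x||^2 - c <x,p> = ||x||^2 - c^2 ||p||^2 *)
  assert (c * (c * hinner p p) = c * hinner x p) by (rewrite Hc; reflexivity).
  assert (0 <= c * hinner x p) by (rewrite <- Hc; nra).
  lra.
Qed.

Lemma scheme_S_bounded (H : Hilbert) (J : functional H) (f : H) (fs ps : nat -> H) :
  scheme_S J f fs ps -> forall n, hnorm (fs n) <= hnorm f.
Proof.
  intros [Hf0 [Hstop Hstep]] n. induction n as [|n IH].
  - rewrite Hf0. lra.
  - destruct (classic (fs n = hzero)) as [Hz | Hnz].
    + rewrite (Hstop n Hz), <- Hz. exact IH.
    + destruct (Hstep n Hnz) as [_ ->].
      eapply Rle_trans; [apply scheme_step_norm_le | exact IH].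
Qed.

Lemma inv_INR_S_small eps : eps > 0 ->
  exists N, forall n, (n >= N)%nat -> / INR (S n) < eps.
Proof.
  intros Heps. destruct (archimed_cor1 eps Heps) as [N [HN HN0]].
  exists N. intros n Hn. eapply Rle_lt_trans; [|exact HN].
  apply Rinv_le_contravar; [apply lt_0_INR; lia | apply le_INR; lia].
Qed.

Lemma Un_cv_const c : Un_cv (fun _ => c) c.
Proof.
  intros eps Heps. exists 0%nat. intros. unfold R_dist.
  rewrite Rminus_diag, Rabs_R0. lra.
Qed.

Lemma Un_cv_scal u l t : Un_cv u l -> Un_cv (fun n => t * u n) (t * l).
Proof. intros Hu. exact (CV_mult (fun _ => t) u t l (Un_cv_const t) Hu). Qed.

Lemma Un_cv_abs_le u l M : Un_cv u l -> (forall n, Rabs (u n) <= M) -> Rabs l <= M.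
Proof.
  intros Hu Hb. destruct (Rle_or_lt (Rabs l) M) as [|Hlt]; [assumption|].
  destruct (Hu (Rabs l - M)) as [N HN]; [lra|].
  specialize (HN N (le_n _)). unfold R_dist in HN. specialize (Hb N).
  pose proof (Rabs_triang_inv l (u N)). rewrite Rabs_minus_sym in HN. lra.
Qed.

Lemma Rabs_le_bounds x c : Rabs x <= c -> - c <= x <= c.
Proof.
  intros Hx. pose proof (Rle_abs x). pose proof (Rle_abs (- x)).
  rewrite Rabs_Ropp in *. lra.
Qed.

Lemma Un_cv_nonneg u l : Un_cv u l -> (forall j, u j > - / INR (S j)) -> 0 <= l.
Proof.
  intros Hu Hb. destruct (Rle_or_lt 0 l) as [|Hneg]; [assumption|]. exfalso.
  destruct (Hu (- l / 2)) as [N1 HN1]; [lra|].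
  destruct (inv_INR_S_small (- l / 2)) as [N2 HN2]; [lra|].
  set (n := max N1 N2).
  specialize (HN1 n ltac:(lia)). specialize (HN2 n ltac:(lia)). specialize (Hb n).
  unfold R_dist in HN1. apply Rabs_def2 in HN1. lra.
Qed.

Definition is_extraction (phi : nat -> nat) : Prop := forall k, (phi k < phi (S k))%nat.

Lemma extraction_ge_id phi : is_extraction phi -> forall k, (k <= phi k)%nat.
Proof. intros Hphi k. induction k as [|k IH]; [lia|]. specialize (Hphi k). lia. Qed.

Lemma extraction_lt phi : is_extraction phi -> forall a b, (a < b)%nat -> (phi a < phi b)%nat.
Proof.
  intros Hphi a b Hab. induction b as [|b IH]; [lia|].
  destruct (Nat.eq_dec a b) as [->|Hne]; [apply Hphi|].
  specialize (Hphi b). specialize (IH ltac:(lia)). lia.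
Qed.

Fixpoint greedy (pick : nat -> nat -> nat) (k : nat) : nat :=
  match k with
  | O => pick O O
  | S k' => pick (S (greedy pick k')) (S k')
  end.

Lemma greedy_extraction (P : nat -> nat -> Prop) :
  (forall N k, exists p, (N <= p)%nat /\ P k p) ->
  exists phi, is_extraction phi /\ forall k, P k (phi k).
Proof.
  intros Hex.
  destruct (choice (fun Nk p => (fst Nk <= p)%nat /\ P (snd Nk) p)) as [pick Hpick].
  { intros [N k]. apply Hex. }
  set (pick2 := fun N k => pick (N, k)).
  exists (greedy pick2). split.
  - intros k. destruct (Hpick (S (greedy pick2 k), S k)) as [Hge _]. exact Hge.
  - intros [|k]; [apply (Hpick (0, 0)%nat) | apply (Hpick (S (greedy pick2 k), S k))].
Qed.

Lemma bounded_convergent_subseq (u : nat -> R) M : (forall n, Rabs (u n) <= M) ->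
  exists phi, is_extraction phi /\ exists l, Un_cv (fun k => u (phi k)) l.
Proof.
  intros Hb.
  destruct (Bolzano_Weierstrass u (fun c => -M <= c <= M) (compact_P3 _ _)) as [l Hl].
  { intros n. apply Rabs_le_bounds, Hb. }
  assert (Hex : forall N k, exists p, (N <= p)%nat /\ Rabs (u p - l) < / INR (S k)).
  { intros N k.
    assert (Hpos : 0 < / INR (S k)) by (apply Rinv_0_lt_compat, lt_0_INR; lia).
    destruct (Hl (fun y => Rabs (y - l) < / INR (S k)) N) as [p Hp].
    - exists (mkposreal _ Hpos). intros y Hy. exact Hy.
    - exists p. exact Hp. }
  destruct (greedy_extraction _ Hex) as [phi [Hphi Hclose]].
  exists phi. split; [exact Hphi|]. exists l.
  intros eps Heps. destruct (inv_INR_S_small eps Heps) as [N HN].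
  exists N. intros k Hk. specialize (HN k Hk). specialize (Hclose k).
  unfold R_dist. lra.
Qed.


(* Iterated refinement: stage m+1 is a subsequence of stage m. *)
Fixpoint nested (refine : (nat -> nat) -> nat -> nat -> nat) (m : nat) : nat -> nat :=
  match m with
  | O => fun k => k
  | S m' => fun k => nested refine m' (refine (nested refine m') m' k)
  end.

Lemma diagonal_subseq (a : nat -> nat -> R) (M : nat -> R) :
  (forall m n, Rabs (a m n) <= M m) ->
  exists d, is_extraction d /\ forall m, exists l, Un_cv (fun k => a m (d k)) l.
Proof.
  intros Hb.
  destruct (choice (fun (sm : (nat -> nat) * nat) phi => is_extraction phi /\
      exists l, Un_cv (fun k => a (snd sm) (fst sm (phi k))) l)) as [ref Href].
  { intros [sg m]. apply (bounded_convergent_subseq (fun k => a m (sg k)) (M m)). intros; apply Hb. }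
  set (sg := nested (fun s m => ref (s, m))).
  assert (Hsg : forall m, is_extraction (sg m)).
  { induction m as [|m IH]; intros k; [unfold sg; simpl; lia|].
    change (sg m (ref (sg m, m) k) < sg m (ref (sg m, m) (S k)))%nat.
    apply extraction_lt; [exact IH | apply (Href (sg m, m))]. }
  assert (Hsub : forall m m', (m <= m')%nat -> exists rho,
      (forall k, (k <= rho k)%nat) /\ forall k, sg m' k = sg m (rho k)).
  { intros m m' Hm. induction Hm as [|m' Hm [rho [Hrho Hsgrho]]].
    - exists (fun k => k). split; reflexivity || lia.
    - exists (fun k => rho (ref (sg m', m') k)). split.
      + intros k. specialize (Hrho (ref (sg m', m') k)).
        pose proof (extraction_ge_id _ (proj1 (Href (sg m', m'))) k). lia.
      + intros k. apply Hsgrho. }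
  exists (fun k => sg (S k) k). split.
  - intros k. change (sg (S k) k < sg (S k) (ref (sg (S k), S k) (S k)))%nat.
    apply extraction_lt; [apply Hsg|].
    pose proof (extraction_ge_id _ (proj1 (Href (sg (S k), S k))) (S k)). lia.
  - intros m. destruct (proj2 (Href (sg m, m))) as [l Hl]. exists l.
    intros eps Heps. destruct (Hl eps Heps) as [N HN]. exists (max N (S m)).
    intros k Hk. destruct (Hsub (S m) (S k) ltac:(lia)) as [rho [Hrho Hsgrho]].
    rewrite Hsgrho. apply HN. specialize (Hrho k). lia.
Qed.


Lemma hconv_inner (H : Hilbert) (z : nat -> H) g x :
  hconv z g -> Un_cv (fun j => hinner (z j) x) (hinner g x).
Proof.
  intros Hz eps Heps. pose proof (hnorm_nonneg _ x) as Hx.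
  destruct (Hz (eps / (hnorm x + 1))) as [N HN]; [apply Rdiv_lt_0_compat; lra|].
  exists N. intros n Hn. specialize (HN n Hn). unfold R_dist.
  rewrite <- inner_sub_l. eapply Rle_lt_trans; [apply cauchy_schwarz|].
  pose proof (hnorm_nonneg _ (hsub (z n) g)).
  assert (eps / (hnorm x + 1) * (hnorm x + 1) = eps) by (field; lra).
  nra.
Qed.

Definition is_subspace {H : Hilbert} (V : H -> Prop) : Prop :=
  V hzero /\ (forall a b, V a -> V b -> V (hadd a b)) /\
  (forall t a, V a -> V (hscal t a)).

Definition bounded_linear_on {H : Hilbert} (V : H -> Prop) (L : H -> R) (B : R) : Prop :=
  (forall a b, V a -> V b -> L (hadd a b) = L a + L b) /\
  (forall t a, V a -> L (hscal t a) = t * L a) /\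
  (forall a, V a -> Rabs (L a) <= B * hnorm a).

Lemma inner_bounded_linear (H : Hilbert) (V : H -> Prop) (u : H) :
  bounded_linear_on V (hinner u) (hnorm u).
Proof.
  split; [|split].
  - intros a b _ _. apply inner_add_r.
  - intros t a _. apply inner_scal_r.
  - intros a _. apply cauchy_schwarz.
Qed.

(* If 0 <= t d + t^2 q for every t, then d = 0 (take t = -d/(q+1)). *)
Lemma quadratic_nonneg_linear_zero d q : 0 <= q ->
  (forall t, 0 <= t * d + t * t * q) -> d = 0.
Proof.
  intros Hq Ht. specialize (Ht (- d / (q + 1))).
  assert (Hprod : 0 <= (q + 1) ^ 2 * (- d / (q + 1) * d + - d / (q + 1) * (- d / (q + 1)) * q))
    by (apply Rmult_le_pos; [apply pow2_ge_0 | exact Ht]).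
  replace ((q + 1) ^ 2 * (- d / (q + 1) * d + - d / (q + 1) * (- d / (q + 1)) * q))
    with (- (d * d)) in Hprod by (field; lra).
  nra.
Qed.

(* Riesz representation of a bounded linear functional L on a (not necessarily
   closed) subspace V: the representative lies in the closure of V and is the
   limit of a minimising sequence of the energy ||z||^2/2 - L z. *)
Section RieszOnSubspace.
Variables (H : Hilbert) (V : H -> Prop) (L : H -> R) (B : R).
Hypothesis HV : is_subspace V.
Hypothesis HL : bounded_linear_on V L B.

Definition energy (z : H) : R := hinner z z / 2 - L z.

(* The energy is bounded below by -B^2/2 on V, so its infimum m is finite and
   approached by a sequence of V. *)
Lemma energy_minimizing_sequence : exists m (z : nat -> H),
  (forall v, V v -> m <= energy v) /\
  (forall j, V (z j) /\ energy (z j) < m + / INR (S j)).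
Proof.
  destruct HV as [V0 _]. destruct HL as [_ [_ Lb]].
  set (E := fun r => exists z, V z /\ r = - energy z).
  destruct (completeness E) as [Ms [Hub Hlub]].
  { (* energy z >= ||z||^2/2 - B ||z|| >= - B^2/2 *)
    exists (B * B / 2). intros r [z [Vz ->]]. unfold energy.
    rewrite <- hnorm_sq. specialize (Lb z Vz). pose proof (Rle_abs (L z)).
    pose proof (pow2_ge_0 (hnorm z - B)). simpl in *. nra. }
  { exists (- energy hzero), hzero. auto. }
  exists (- Ms). assert (Hinf : forall v, V v -> - Ms <= energy v).
  { intros v Vv. assert (- energy v <= Ms) by (apply Hub; exists v; auto). lra. }
  assert (Hnear : forall j, exists z, V z /\ energy z < - Ms + / INR (S j)).
  { intros j. apply NNPP. intros Hnone.
    assert (Hpos : 0 < / INR (S j)) by (apply Rinv_0_lt_compat, lt_0_INR; lia).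
    assert (Ms <= Ms - / INR (S j)); [|lra].
    apply Hlub. intros r [z [Vz ->]].
    destruct (Rle_or_lt (- energy z) (Ms - / INR (S j))) as [|Hlt]; [assumption|].
    exfalso. apply Hnone. exists z. split; [exact Vz | lra]. }
  destruct (choice _ Hnear) as [z Hz]. exists z. split; assumption.
Qed.

(* Parallelogram identity: near-minimisers are close to each other. *)
Lemma energy_parallelogram m a b : (forall v, V v -> m <= energy v) -> V a -> V b ->
  hinner (hsub a b) (hsub a b) <= 4 * (energy a + energy b) - 8 * m.
Proof.
  intros Hinf Va Vb. destruct HV as [_ [Vadd Vscal]]. destruct HL as [Ladd [Lscal _]].
  specialize (Hinf _ (Vscal (/ 2) _ (Vadd a b Va Vb))). unfold energy in *.
  rewrite Lscal, Ladd, hinner_scal_l, !inner_scal_r, !hinner_add_l, !inner_add_r in Hinf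
    by auto.
  rewrite inner_sub_l, !inner_sub_r, (hinner_sym _ b a). rewrite (hinner_sym _ b a) in Hinf.
  lra.
Qed.

(* Euler equation: the limit of a minimising sequence represents L on V. *)
Lemma minimizer_limit_represents m (z : nat -> H) g :
  (forall v, V v -> m <= energy v) ->
  (forall j, V (z j) /\ energy (z j) < m + / INR (S j)) ->
  hconv z g -> forall v, V v -> hinner g v = L v.
Proof.
  intros Hinf Hz Hg v Vv. destruct HV as [_ [Vadd Vscal]]. destruct HL as [Ladd [Lscal _]].
  enough (hinner g v - L v = 0) by lra.
  apply (quadratic_nonneg_linear_zero _ (hinner v v / 2));
    [pose proof (hinner_pos H v); lra|].
  intros t.
  (* m <= energy (z j + t v) = energy (z j) + t (<z j, v> - L v) + t^2 ||v||^2/2 *)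
  apply (Un_cv_nonneg (fun j => t * (hinner (z j) v - L v) + t * t * (hinner v v / 2))).
  - apply CV_plus; [|apply Un_cv_const].
    apply Un_cv_scal, CV_minus; [apply hconv_inner, Hg | apply Un_cv_const].
  - intros j. destruct (Hz j) as [Vzj Ezj].
    specialize (Hinf _ (Vadd _ _ Vzj (Vscal t v Vv))). unfold energy in *.
    rewrite Ladd, Lscal, !hinner_add_l, !inner_add_r, !hinner_scal_l, !inner_scal_r,
      (hinner_sym _ v (z j)) in Hinf by auto.
    lra.
Qed.

Lemma riesz_on_subspace : exists g (z : nat -> H),
  (forall j, V (z j)) /\ hconv z g /\ forall v, V v -> hinner g v = L v.
Proof.
  destruct energy_minimizing_sequence as [m [z [Hinf Hz]]].
  destruct (hcomplete H z) as [g Hg].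
  { intros eps Heps. destruct (inv_INR_S_small (eps * eps / 8)) as [N HN]; [nra|].
    exists N. intros i k Hi Hk.
    pose proof (energy_parallelogram m (z i) (z k) Hinf (proj1 (Hz i)) (proj1 (Hz k))).
    pose proof (HN i Hi). pose proof (HN k Hk). pose proof (Hz i). pose proof (Hz k).
    rewrite <- (sqrt_Rsqr eps) by lra. apply sqrt_lt_1_alt. split; [apply hinner_pos|].
    unfold Rsqr, hsub in *. lra. }
  exists g, z. split; [intros j; apply Hz|]. split; [exact Hg|].
  exact (minimizer_limit_represents m z g Hinf Hz Hg).
Qed.

End RieszOnSubspace.


Lemma weak_conv_by_density (H : Hilbert) (x : nat -> H) B g p (s : nat -> H) :
  (forall k, hnorm (x k) <= B) -> hconv s p ->
  (forall j, Un_cv (fun k => hinner (x k) (s j)) (hinner g (s j))) ->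
  Un_cv (fun k => hinner (x k) p) (hinner g p).
Proof.
  intros Hx Hs Hxs eps Heps.
  assert (HB : 0 <= B) by (pose proof (hnorm_nonneg _ (x 0%nat)); specialize (Hx 0%nat); lra).
  pose proof (hnorm_nonneg _ g) as Hg.
  set (K := B + hnorm g + 1).
  destruct (Hs (eps / (2 * K))) as [j Hj]; [unfold K; apply Rdiv_lt_0_compat; lra|].
  specialize (Hj j (le_n _)). set (delta := hnorm (hsub (s j) p)) in Hj.
  assert (Hdelta : 0 <= delta) by apply hnorm_nonneg.
  destruct (Hxs j (eps / 2)) as [N HN]; [lra|].
  exists N. intros k Hk. specialize (HN k Hk). unfold R_dist in *.
  (* <x k - g, p> = <x k - g, s j> - <x k, s j - p> + <g, s j - p> *)
  pose proof (inner_bound _ (x k) (hsub (s j) p) B (Hx k)) as Cx.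
  pose proof (cauchy_schwarz _ g (hsub (s j) p)) as Cg.
  rewrite inner_sub_r in Cx, Cg.
  assert (Hsmall : (B + hnorm g) * delta <= eps / 2).
  { assert (K * (eps / (2 * K)) = eps / 2) by (unfold K; field; lra).
    assert ((B + hnorm g) * delta <= K * delta) by (unfold K; nra). nra. }
  apply Rabs_le_bounds in Cx, Cg. apply Rabs_def2 in HN.
  apply Rabs_def1; fold delta in Cx, Cg; nra.
Qed.

(* A bounded sequence lying in a subspace V, and converging weakly against V
   to a point g of the closure of V, converges weakly in H to g: an arbitrary
   test vector u can be replaced by its projection p onto the closure of V. *)
Lemma weak_conv_from_subspace (H : Hilbert) (V : H -> Prop) (x : nat -> H) B g (z : nat -> H) :
  is_subspace V -> (forall k, hnorm (x k) <= B) -> (forall k, V (x k)) ->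
  (forall j, V (z j)) -> hconv z g ->
  (forall v, V v -> Un_cv (fun k => hinner (x k) v) (hinner g v)) ->
  hweak_conv x g.
Proof.
  intros HV Hx Vx Vz Hz Hxv u.
  destruct (riesz_on_subspace H V (hinner u) (hnorm u) HV (inner_bounded_linear H V u))
    as [p [s [Vs [Hs Hp]]]].
  assert (Hxu : forall k, hinner (x k) u = hinner (x k) p).
  { intros k. rewrite !(hinner_sym _ (x k)). symmetry. apply Hp, Vx. }
  assert (Hgu : hinner g u = hinner g p).
  { apply (UL_sequence (fun j => hinner (z j) u)); [apply hconv_inner, Hz|].
    apply (Un_cv_ext (fun j => hinner (z j) p)); [|apply hconv_inner, Hz].
    intros j. rewrite !(hinner_sym _ (z j)). apply Hp, Vz. }
  rewrite Hgu. apply (Un_cv_ext (fun k => hinner (x k) p)); [intros k; symmetry; apply Hxu|].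
  apply (weak_conv_by_density H x B g p s Hx Hs). intros j. apply Hxv, Vs.
Qed.

Inductive in_span (H : Hilbert) (y : nat -> H) : H -> Prop :=
  | span_zero : in_span H y hzero
  | span_gen m : in_span H y (y m)
  | span_add a b : in_span H y a -> in_span H y b -> in_span H y (hadd a b)
  | span_scal t a : in_span H y a -> in_span H y (hscal t a).

Lemma in_span_subspace (H : Hilbert) (y : nat -> H) : is_subspace (in_span H y).
Proof. split; [|split]; intros; constructor; assumption. Qed.

Lemma span_inner_limits (H : Hilbert) (y x : nat -> H) :
  (forall m, exists l, Un_cv (fun k => hinner (x k) (y m)) l) ->
  forall v, in_span H y v -> exists l, Un_cv (fun k => hinner (x k) v) l.
Proof.
  intros Hgen v Hv. induction Hv as [|m|a b _ [la Ha] _ [lb Hb]|t a _ [la Ha]].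
  - exists 0. apply (Un_cv_ext (fun _ => 0)); [intros k; symmetry; apply inner_zero_r|].
    apply Un_cv_const.
  - apply Hgen.
  - exists (la + lb). apply (Un_cv_ext (fun k => hinner (x k) a + hinner (x k) b)).
    + intros k. symmetry. apply inner_add_r.
    + apply CV_plus; assumption.
  - exists (t * la). apply (Un_cv_ext (fun k => t * hinner (x k) a)).
    + intros k. symmetry. apply inner_scal_r.
    + apply Un_cv_scal, Ha.
Qed.

Lemma limit_functional_bounded_linear (H : Hilbert) (V : H -> Prop) (x : nat -> H) B L :
  is_subspace V -> (forall k, hnorm (x k) <= B) ->
  (forall v, V v -> Un_cv (fun k => hinner (x k) v) (L v)) ->
  bounded_linear_on V L B.
Proof.
  intros [_ [Vadd Vscal]] Hx HL. split; [|split].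
  - intros a b Va Vb. apply (UL_sequence (fun k => hinner (x k) (hadd a b))); [apply HL; auto|].
    apply (Un_cv_ext (fun k => hinner (x k) a + hinner (x k) b));
      [intros k; symmetry; apply inner_add_r | apply CV_plus; auto].
  - intros t a Va. apply (UL_sequence (fun k => hinner (x k) (hscal t a))); [apply HL; auto|].
    apply (Un_cv_ext (fun k => t * hinner (x k) a));
      [intros k; symmetry; apply inner_scal_r | apply Un_cv_scal; auto].
  - intros a Va. apply (Un_cv_abs_le _ _ _ (HL a Va)). intros k. apply inner_bound, Hx.
Qed.

Theorem bounded_weakly_convergent_subseq (H : Hilbert) (y : nat -> H) B :
  (forall n, hnorm (y n) <= B) ->
  exists (d : nat -> nat) (g : H), is_extraction d /\ hweak_conv (fun k => y (d k)) g.
Proof.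
  intros Hy.
  destruct (diagonal_subseq (fun m n => hinner (y n) (y m)) (fun m => B * hnorm (y m)))
    as [d [Hd Hlim]]; [intros m n; apply inner_bound, Hy|].
  set (x := fun k => y (d k)).
  assert (Hx : forall k, hnorm (x k) <= B) by (intros k; apply Hy).
  destruct (choice (fun v l => in_span H y v -> Un_cv (fun k => hinner (x k) v) l)) as [L HL].
  { intros v. destruct (classic (in_span H y v)) as [Hv|Hv].
    - destruct (span_inner_limits H y x Hlim v Hv) as [l Hl]. exists l. auto.
    - exists 0. intros Hv'. contradiction. }
  destruct (riesz_on_subspace H (in_span H y) L B (in_span_subspace H y)
              (limit_functional_bounded_linear H _ x B L (in_span_subspace H y) Hx HL))
    as [g [z [Vz [Hz Hg]]]].
  exists d, g. split; [exact Hd|].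
  apply (weak_conv_from_subspace H (in_span H y) x B g z (in_span_subspace H y) Hx);
    [intros k; exact (span_gen H y (d k)) | exact Vz | exact Hz |].
  intros v Hv. rewrite Hg by exact Hv. apply HL, Hv.
Qed.

Theorem theorem2 (H : Hilbert) (J : functional H)
  (HJp : proper J) (HJc : convex J) (HJl : lsc J)
  (HJh : abs_one_homogeneous J) (HJP : poincare J)
  (f : H) (Hf : in_null_perp J f) (fs ps : nat -> H)
  (HS : scheme_S J f fs ps) :
  (forall n, hnorm (fs n) <= hnorm f) /\
  exists (nk : nat -> nat) (g : H),
    (forall k, (nk k < nk (S k))%nat) /\
    hweak_conv (fun k => fs (nk k)) g.
Proof.
  pose proof (scheme_S_bounded H J f fs ps HS) as Hbounded.
  split; [exact Hbounded|].
  exact (bounded_weakly_convergent_subseq H fs (hnorm f) Hbounded).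
Qed.
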